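(* The steady-state download time in the FJ-SM system stochastically dominates those in the FJ-FA and FJ-GA systems (all with the same arrival rate, storage code and service model): for all $x\ge 0$, $\Pr\{T_{\text{FJ-GA}} > x\} \le \Pr\{T_{\text{FJ-SM}} > x\}$ and $\Pr\{T_{\text{FJ-FA}} > x\} \le \Pr\{T_{\text{FJ-SM}} > x\}$.
   Context: Storage model: $k$ objects $f_1,\dots,f_k$ are encoded by a systematic $(n,k)$ linear code on $n$ servers with $(r,t)$-availability: for each systematic server $i$ there are $t$ pairwise disjoint recovery groups of $r$ servers from any one of which $f_i$ can be recovered. Requests arrive as a Poisson process of rate $\lambda$. Fork-Join access: a request for $f_i$ is replicated into one copy at systematic server $i$ and one at each of its $t$ recovery groups; a recovery-group copy is forked into $r$ sub-copies (one per server of the group) and completes when all finish; the request completes when its systematic copy finishes or some recovery-group copy completes, and all its outstanding copies/sub-copies are then removed immediately. Each server has a FCFS queue; service times are independent, each $\mathrm{Exp}(\mu)$. FJ-GA: each request independently asks for $f_i$ with probability $p_i$. FJ-FA: every request asks for the same object. FJ-SM: requests wait in a centralized FCFS queue and the request at its head is admitted to the servers (and served by the Fork-Join scheme) only when all servers are idle. Download time is departure minus arrival time, in steady state; the systems are assumed stable. *)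

From HB Require Import structures.
From mathcomp Require Import all_boot all_order all_algebra.
From mathcomp Require Import all_classical all_reals all_analysis.
Set Implicit Arguments. Unset Strict Implicit. Unset Printing Implicit Defensive.
Import Order.TTheory GRing.Theory Num.Theory.
Local Open Scope classical_set_scope.
Local Open Scope ring_scope.

Definition mutually_independent {d} {T : measurableType d} {R : realType}
  (P : probability T R) {I : eqType} (Y : I -> T -> R) : Prop :=
  forall (J : seq I) (B : I -> set R), uniq J -> (forall i, measurable (B i)) ->
    P (\bigcap_(i in [set` J]) (Y i @^-1` B i))
    = (\prod_(i <- J) fine (P (Y i @^-1` B i)))%:E.

(* Storage model: systematic (n,k) linear code over a field F with          *)
(* generator matrix G (server s stores sum_l f_l * G l s), with (r,t)-      *)
(* availability: for each systematic server i (= server i, i < k) there     *)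
(* are t pairwise disjoint recovery groups grp i g of r servers, not         *)
(* containing i, from each of which f_i is a linear combination.            *)
Definition systematic_rt_available (F : fieldType) (n k t r : nat)
  (hkn : (k <= n)%N) (G : 'M[F]_(k, n)) (grp : 'I_k -> 'I_t -> {set 'I_n}) : Prop :=
  (forall i l : 'I_k, G l (widen_ord hkn i) = (l == i)%:R) /\
  (forall i : 'I_k,
     (forall g, #|grp i g| = r) /\
     (forall g1 g2, g1 != g2 -> (grp i g1 :&: grp i g2 = finset.set0)%SET) /\
     (forall g, widen_ord hkn i \notin grp i g) /\
     (forall g, exists a : 'I_n -> F,
        forall l : 'I_k, \sum_(s in grp i g) a s * G l s = (l == i)%:R)).

(* Sample-path dynamics of Fork-Join access with FCFS server queues.       *)
(* One request: arrival time a, systematic server si, recovery groups grp, *)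
(* service time S s of its (sub-)copy at server s, and free s = time at     *)
(* which server s has finished with (or discarded) all copies of earlier    *)
(* requests.  Returns (departure time, updated free times).  Because        *)
(* service is exponential (memoryless), drawing one service time per        *)
(* (request, server) is the same model as drawing it when the copy starts. *)
Definition fj_step {R : realType} (n t : nat) (si : 'I_n)
  (grp : 'I_t -> {set 'I_n}) (a : R) (S : 'I_n -> R) (free : 'I_n -> R)
  : R * ('I_n -> R) :=
  let start s := Num.max a (free s) in
  let C s := start s + S s in
  let D := Num.min (C si)
             (\big[Num.min/C si]_(g < t) \big[Num.max/a]_(s in grp g) C s) in
  (D, fun s => if (s == si) || [exists g, s \in grp g] then
                 (if D <= start s then free s   (* copy removed before start *)
                  else Num.min (C s) D)          (* finished, or removed at D *)
               else free s).

Section Systems.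
Context {R : realType} (n k t : nat) (hkn : (k <= n)%N)
  (grp : 'I_k -> 'I_t -> {set 'I_n})
  (A : nat -> R)            (* arrival time of request j *)
  (file : nat -> 'I_k)      (* object requested by request j *)
  (S : nat -> 'I_n -> R).   (* service time of request j's copy at server s *)

Definition req_step (j : nat) (free : 'I_n -> R) :=
  fj_step (widen_ord hkn (file j)) (grp (file j)) (A j) (S j) free.

(* free times of servers after requests 0..j-1 (system initially empty) *)
Fixpoint fj_free (j : nat) : 'I_n -> R :=
  match j with
  | 0 => fun _ => 0
  | j'.+1 => (req_step j' (fj_free j')).2
  end.

(* departure time of request j under FCFS Fork-Join (FJ-GA / FJ-FA) *)
Definition fj_departure (j : nat) : R := (req_step j (fj_free j)).1.

(* FJ-SM: centralized FCFS queue; head request admitted when all servers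
   are idle, i.e. at max(arrival, previous departure). *)
Fixpoint sm_departure (j : nat) : R :=
  let prev := match j with 0 => 0 | j'.+1 => sm_departure j' end in
  let st := Num.max (A j) prev in
  (fj_step (widen_ord hkn (file j)) (grp (file j)) st (S j) (fun _ => st)).1.
End Systems.

Definition arrivals {T} {R : realType} (X : nat -> T -> R) (w : T) (j : nat) : R :=
  \sum_(l < j.+1) X l w.

Definition prim_idx (n : nat) : eqType := (nat + nat * 'I_n + nat)%type.
Definition prim_rv {T} {R : realType} (n k : nat) (X : nat -> T -> R)
  (Sv : nat -> 'I_n -> T -> R) (Ch : nat -> T -> 'I_k) (i : prim_idx n) : T -> R :=
  match i with
  | inl (inl j) => X j
  | inl (inr (j, s)) => Sv j s
  | inr j => fun w => (nat_of_ord (Ch j w))%:R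
  end.

From HB Require Import structures.
From mathcomp Require Import all_boot all_order all_algebra.
From mathcomp Require Import all_classical all_reals all_analysis.
From mathcomp Require Import measurable_realfun.
(* In FJ-SM a request is admitted only when all servers are idle, so by induction on requests
   every server of the FCFS Fork-Join system is free no later than the previous FJ-SM
   departure.  Departure times being monotone in the arrival and server-free times, each
   request leaves FJ-GA (or FJ-FA) no later than FJ-SM whenever service times are
   nonnegative, i.e. almost surely.  This settles FJ-GA.  For FJ-FA it remains to see that
   the FJ-SM sojourn time has the same law when all requests ask for one object as when
   objects are drawn at random.  As FJ-SM never overlaps requests, the sojourn time of request
   J is a fixed function of the interarrival times and of the service times indexed by role
   (systematic copy, or q-th server of a recovery group), and roles map injectively to
   servers; on each event "requests 0..J chose c", independence factors the joint law of
   these variables into a product that does not depend on c. *)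

Set Implicit Arguments.
Unset Strict Implicit.
Unset Printing Implicit Defensive.

Import Order.TTheory GRing.Theory Num.Theory numFieldNormedType.Exports.
Local Open Scope classical_set_scope.
Local Open Scope ring_scope.

Section measurable_lemmas.
Context {d : measure_display} {T : measurableType d} {R : realType}.
Implicit Types f g : T -> R.

Lemma measurable_fun_bigop (I : Type) (s : seq I) (P : pred I) (op : R -> R -> R)
    (idx : T -> R) (F : I -> T -> R) :
  (forall f g, measurable_fun setT f -> measurable_fun setT g ->
     measurable_fun setT (fun w => op (f w) (g w))) ->
  measurable_fun setT idx -> (forall i, measurable_fun setT (F i)) ->
  measurable_fun setT (fun w => \big[op/idx w]_(i <- s | P i) F i w).
Proof.
move=> mop midx mF; elim: s => [|i s IH]; first by under eq_fun do rewrite big_nil.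
by under eq_fun do rewrite big_cons; case: (P i) => //; apply: mop.
Qed.

Lemma measurable_fun_switch (I : finType) (c : T -> I) (F : I -> T -> R) :
  (forall i, measurable [set w | c w = i]) -> (forall i, measurable_fun setT (F i)) ->
  measurable_fun setT (fun w => F (c w) w).
Proof.
move=> mc mF _ B mB; rewrite setTI.
have -> : (fun w => F (c w) w) @^-1` B =
    \bigcup_(i in setT) ([set w | c w = i] `&` F i @^-1` B).
  by apply/seteqP; split=> [w Bw|w [i _ [<-]]] //; exists (c w).
apply: fin_bigcup_measurable => [|i _]; first exact: finite_finset.
by apply: measurableI => //; rewrite -[_ @^-1` _]setTI; apply: mF.
Qed.

Lemma measurable_forall (I : finType) (A : I -> set T) :
  (forall i, measurable (A i)) -> measurable [set w | forall i, A i w].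
Proof.
move=> mA; rewrite (_ : [set w | _] = \bigcap_(i in setT) A i).
  by apply: fin_bigcap_measurable => //; exact: finite_finset.
by apply/seteqP; split=> [w + i _|w + i]; [|apply].
Qed.

Lemma measurable_lt_fun (x : R) f : measurable_fun setT f -> measurable [set w | x < f w].
Proof.
move=> mf; rewrite (_ : [set w | _] = f @^-1` `]x, +oo[).
  by rewrite -[_ @^-1` _]setTI; apply: mf.
by apply/seteqP; split=> w /=; rewrite in_itv /= andbT.
Qed.

Lemma measurable_const_set (Q : Prop) : measurable [set _ : T | Q].
Proof.
have [q|nq] := pselect Q; [rewrite (_ : [set _ | Q] = setT)|rewrite (_ : [set _ | Q] = set0)] => //.
all: by apply/seteqP; split.
Qed.

End measurable_lemmas.

Section probability_lemmas.
Context {d : measure_display} {T : measurableType d} {R : realType} (P : probability T R).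

Lemma measure_finite_partition (I : finType) (c : T -> I) (A : set T) :
  (forall i, measurable [set w | c w = i]) -> measurable A ->
  P A = (\sum_(i : I) P (A `&` [set w | c w = i]))%E.
Proof.
move=> mc mA.
have {1}-> : A = \bigcup_(i in setT) (A `&` [set w | c w = i]).
  by apply/seteqP; split=> [w Aw|w [i _ []]] //; exists (c w).
rewrite measure_fin_bigcup //; last 3 first.
- exact: finite_finset.
- by move=> i j _ _ [w [[_ <-] [_ <-]]].
- by move=> i _; apply: measurableI.
rewrite (fsbigE (enum I)) ?enum_uniq // => [|i]; last by rewrite mem_enum.
by under eq_bigl do rewrite in_setT; rewrite big_enum.
Qed.

Lemma fine_measure_le_negligible (A B N : set T) :
  measurable A -> measurable B -> P.-negligible N -> A `<=` B `|` N ->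
  fine (P A) <= fine (P B).
Proof.
move=> mA mB [M [mM PM0 NM]] ABN.
apply: fine_le; rewrite ?fin_num_measure //.
apply: (@le_trans _ _ (P (B `|` M))).
  by apply: le_measure; rewrite ?inE //; [exact: measurableU|
     move=> w /ABN [|/NM]; [left|right]].
by apply: (le_trans (measureU2 P mB mM)); rewrite [X in (_ + X)%E](_ : _ = 0%E) ?adde0.
Qed.

End probability_lemmas.

Section fj_step_lemmas.
Context {R : realType} (n t : nat) (si : 'I_n) (grp : 'I_t -> {set 'I_n}) (S : 'I_n -> R).

Lemma le_fj_step_departure (a a' : R) (free free' : 'I_n -> R) :
  a <= a' -> (forall s, free s <= free' s) ->
  (fj_step si grp a S free).1 <= (fj_step si grp a' S free').1.
Proof.
move=> le_a le_free.
have le_C s : Num.max a (free s) + S s <= Num.max a' (free' s) + S s.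
  by rewrite lerD2r le_max2.
apply: le_min2 => //; apply: (big_ind2 (fun x y => x <= y)) => // [*|g _].
  exact: le_min2.
by apply: (big_ind2 (fun x y => x <= y)) => // *; apply: le_max2.
Qed.

Lemma fj_step_departure_ge (a : R) (free : 'I_n -> R) :
  (forall s, 0 <= S s) -> a <= (fj_step si grp a S free).1.
Proof.
move=> S_ge0.
have ge_C s : a <= Num.max a (free s) + S s.
  by apply: (@le_trans _ _ (Num.max a (free s))); rewrite ?lerDl ?le_max ?lexx.
rewrite le_min ge_C /=; apply: (big_ind (fun y => a <= y)) => // [x y ax ay|g _].
  by rewrite le_min ax ay.
by apply: (big_ind (fun y => a <= y)) => // x y ax _; rewrite le_max ax.
Qed.

Lemma fj_step_free_le (a : R) (free : 'I_n -> R) (s : 'I_n) :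
  (fj_step si grp a S free).2 s <= Num.max (free s) (fj_step si grp a S free).1.
Proof.
rewrite /=; move: (Num.min _ _) => D.
by do 2?case: ifP => _; rewrite ?ge_min !le_max !lexx ?orbT.
Qed.

End fj_step_lemmas.

Section fj_le_sm.
Context {R : realType} (n k t : nat) (hkn : (k <= n)%N) (grp : 'I_k -> 'I_t -> {set 'I_n})
  (A : nat -> R) (file : nat -> 'I_k) (S : nat -> 'I_n -> R).
Hypothesis S_ge0 : forall j s, 0 <= S j s.

Definition sm_prev_departure (j : nat) : R :=
  if j is j'.+1 then sm_departure hkn grp A file S j' else 0.

Let sm_start j := Num.max (A j) (sm_prev_departure j).

Lemma sm_departureE j : sm_departure hkn grp A file S j =
  (fj_step (widen_ord hkn (file j)) (grp (file j)) (sm_start j) (S j) (fun=> sm_start j)).1.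
Proof. by case: j. Qed.

Lemma sm_prev_departure_le j : sm_prev_departure j <= sm_departure hkn grp A file S j.
Proof.
rewrite sm_departureE; apply: le_trans (fj_step_departure_ge _ _ _ _ (S_ge0 j)).
by rewrite le_max lexx orbT.
Qed.

Lemma req_step_le_sm_departure j (free : 'I_n -> R) :
  (forall s, free s <= sm_prev_departure j) ->
  (req_step hkn grp A file S j free).1 <= sm_departure hkn grp A file S j.
Proof.
move=> free_le; rewrite sm_departureE.
by apply: le_fj_step_departure => [|s]; rewrite le_max ?lexx ?free_le ?orbT.
Qed.

Lemma fj_free_le_sm_prev_departure j s : fj_free hkn grp A file S j s <= sm_prev_departure j.
Proof.
elim: j s => [|j IH] s //=; apply: le_trans (fj_step_free_le _ _ _ _ _ s) _.
rewrite ge_max req_step_le_sm_departure // andbT.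
exact: le_trans (IH s) (sm_prev_departure_le j).
Qed.

Lemma fj_departure_le_sm_departure j :
  fj_departure hkn grp A file S j <= sm_departure hkn grp A file S j.
Proof. exact/req_step_le_sm_departure/fj_free_le_sm_prev_departure. Qed.

End fj_le_sm.

Section measurable_dynamics.
Context {d : measure_display} {T : measurableType d} {R : realType} (n : nat).
Notation mfun f := (measurable_fun [set: T] (f : T -> R)).

Section fixed_request.
Context (t : nat) (si : 'I_n) (grp : 'I_t -> {set 'I_n}) (a : T -> R)
  (S free : 'I_n -> T -> R).
Hypotheses (ma : mfun a) (mS : forall s, mfun (S s)) (mfree : forall s, mfun (free s)).

Let mC s : mfun (fun w => Num.max (a w) (free s w) + S s w).
Proof. exact/measurable_funD/mS/measurable_maxr. Qed.

Lemma measurable_fj_step_departure : mfun (fun w => (fj_step si grp (a w) (S^~ w) (free^~ w)).1).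
Proof.
apply: measurable_minr => //; apply: measurable_fun_bigop => // [*|g].
  exact: measurable_minr.
by apply: measurable_fun_bigop => // *; apply: measurable_maxr.
Qed.

Lemma measurable_fj_step_free s : mfun (fun w => (fj_step si grp (a w) (S^~ w) (free^~ w)).2 s).
Proof.
rewrite /=; case: (_ || _) => //; apply: measurable_fun_ifT.
- apply: measurable_fun_ler; first exact: measurable_fj_step_departure.
  exact: measurable_maxr ma (mfree s).
- exact: mfree.
- exact/measurable_minr/measurable_fj_step_departure.
Qed.

End fixed_request.

Context (k t : nat) (hkn : (k <= n)%N) (grp : 'I_k -> 'I_t -> {set 'I_n})
  (A : T -> nat -> R) (file : nat -> T -> 'I_k) (S : nat -> 'I_n -> T -> R).
Hypotheses (mA : forall j, mfun (A^~ j)) (mfile : forall j i, measurable [set w | file j w = i])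
  (mS : forall j s, mfun (S j s)).

Lemma measurable_fj_free j s :
  mfun (fun w => fj_free hkn grp (A w) (file^~ w) (fun j s => S j s w) j s).
Proof.
elim: j s => [|j IH] s; first exact: measurable_cst.
apply: (measurable_fun_switch (F := fun i w => (fj_step (widen_ord hkn i) (grp i) (A w j)
  (S j ^~ w) (fj_free hkn grp (A w) (file^~ w) (fun j s => S j s w) j)).2 s)) => // i.
exact: measurable_fj_step_free.
Qed.

Lemma measurable_fj_departure j :
  mfun (fun w => fj_departure hkn grp (A w) (file^~ w) (fun j s => S j s w) j).
Proof.
apply: (measurable_fun_switch (F := fun i w => (fj_step (widen_ord hkn i) (grp i) (A w j)
  (S j ^~ w) (fj_free hkn grp (A w) (file^~ w) (fun j s => S j s w) j)).1)) => // i.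
by apply: measurable_fj_step_departure => // s; apply: measurable_fj_free.
Qed.

Lemma measurable_sm_departure j :
  mfun (fun w => sm_departure hkn grp (A w) (file^~ w) (fun j s => S j s w) j).
Proof.
have step l : mfun (fun w => sm_prev_departure hkn grp (A w) (file^~ w) (fun j s => S j s w) l) ->
    mfun (fun w => sm_departure hkn grp (A w) (file^~ w) (fun j s => S j s w) l).
  set prev := fun w => _ => mprev; under eq_fun do rewrite sm_departureE.
  apply: (measurable_fun_switch (F := fun i w => (fj_step (widen_ord hkn i) (grp i)
    (Num.max (A w l) (prev w)) (S l ^~ w) (fun=> Num.max (A w l) (prev w))).1)) => // i.
  by apply: measurable_fj_step_departure => // [|s]; exact: measurable_maxr (mA l) mprev.
by elim: j => [|j IH]; apply: step => //; exact: measurable_cst.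
Qed.

End measurable_dynamics.

Lemma big_set_nth_enum {U : Type} (idx : U) (op : SemiGroup.com_law U) (I : finType)
    (A : {set I}) (x0 : I) (F : I -> U) :
  \big[op/idx]_(s in A) F s = \big[op/idx]_(q < #|A|) F (nth x0 (enum A) q).
Proof.
rewrite -(big_enum op idx A F) -[in LHS](mkseq_nth x0 (enum A)) big_map -cardE.
by rewrite -(big_mkord xpredT (fun q => F (nth x0 (enum A) q))) /index_iota subn0.
Qed.

(* [None] is the systematic copy, [Some (g, q)] the [q]-th server of recovery group [g]. *)
Definition role (t r : nat) := option ('I_t * 'I_r).

Section roles.
Context {R : realType} (t r : nat).

Definition idle_departure (st : R) (v : role t r -> R) : R :=
  Num.min (st + v None)
    (\big[Num.min/(st + v None)]_(g < t) \big[Num.max/st]_(q < r) (st + v (Some (g, q)))).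

Fixpoint sm_departure_roles (A : nat -> R) (v : nat -> role t r -> R) (j : nat) : R :=
  let prev := if j is j'.+1 then sm_departure_roles A v j' else 0 in
  idle_departure (Num.max (A j) prev) (v j).

Lemma eq_sm_departure_roles (A1 A2 : nat -> R) (v1 v2 : nat -> role t r -> R) J :
  (forall l, (l <= J)%N -> A1 l = A2 l) -> (forall l, (l <= J)%N -> v1 l =1 v2 l) ->
  sm_departure_roles A1 v1 J = sm_departure_roles A2 v2 J.
Proof.
elim: J => [|J IH] eqA eqv /=; first by rewrite eqA // (funext (eqv 0%N _)).
rewrite eqA // (funext (eqv J.+1 _)) // IH // => l lJ.
  exact/eqA/(leq_trans lJ).
exact/eqv/(leq_trans lJ).
Qed.

Context (n k : nat) (hkn : (k <= n)%N) (grp : 'I_k -> 'I_t -> {set 'I_n}).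
Hypothesis card_grp : forall i g, #|grp i g| = r.

Definition role_server (i : 'I_k) (rho : role t r) : 'I_n :=
  if rho is Some (g, q) then nth (widen_ord hkn i) (enum (grp i g)) q else widen_ord hkn i.

Lemma fj_step_idle_roles (i : 'I_k) (st : R) (S : 'I_n -> R) :
  (fj_step (widen_ord hkn i) (grp i) st S (fun=> st)).1 =
  idle_departure st (fun rho => S (role_server i rho)).
Proof.
rewrite /= maxxx; congr Num.min; apply: eq_bigr => g _.
by rewrite (big_set_nth_enum _ _ _ (widen_ord hkn i)) card_grp.
Qed.

Lemma sm_departure_rolesE (A : nat -> R) (file : nat -> 'I_k) (S : nat -> 'I_n -> R) j :
  sm_departure hkn grp A file S j =
  sm_departure_roles A (fun l rho => S l (role_server (file l) rho)) j.
Proof. by elim: j => [|j IH]; rewrite /= -?IH -fj_step_idle_roles. Qed.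

Lemma role_server_inj (i : 'I_k) :
  (forall g1 g2, g1 != g2 -> (grp i g1 :&: grp i g2 = finset.set0)%SET) ->
  (forall g, widen_ord hkn i \notin grp i g) ->
  injective (role_server i).
Proof.
move=> disj_grp notin_grp.
have nth_grp g (q : 'I_r) : nth (widen_ord hkn i) (enum (grp i g)) q \in grp i g.
  by rewrite -mem_enum mem_nth // -cardE card_grp.
case=> [[g1 q1]|] [[g2 q2]|] //= eq_s; last 2 first.
- by have := nth_grp g1 q1; rewrite eq_s (negbTE (notin_grp g1)).
- by have := nth_grp g2 q2; rewrite -eq_s (negbTE (notin_grp g2)).
have [eq_g|neq_g] := eqVneq g1 g2.
  subst g2; congr (Some (_, _)); apply/val_inj/eqP.
  by move/eqP: eq_s; rewrite nth_uniq ?enum_uniq // -cardE card_grp.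
have /setP/(_ (nth (widen_ord hkn i) (enum (grp i g1)) q1)) := disj_grp _ _ neq_g.
by rewrite !inE nth_grp eq_s nth_grp.
Qed.

End roles.

Lemma measurable_sm_departure_roles {d : measure_display} {T : measurableType d}
    {R : realType} (t r : nat) (A : T -> nat -> R) (v : T -> nat -> role t r -> R) :
  (forall l, measurable_fun setT (A^~ l)) ->
  (forall l rho, measurable_fun setT (fun w => v w l rho)) ->
  forall j, measurable_fun setT (fun w => sm_departure_roles (A w) (v w) j).
Proof.
move=> mA mv.
have m_idle (st : T -> R) l : measurable_fun setT st ->
    measurable_fun setT (fun w => idle_departure (st w) (v w l)).
  move=> mst; apply: measurable_minr; first exact: measurable_funD.
  apply: measurable_fun_bigop => [*||g]; [exact: measurable_minr|exact: measurable_funD|].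
  apply: measurable_fun_bigop => // [*|q]; [exact: measurable_maxr|exact: measurable_funD].
by elim=> [|j IH] /=; apply: m_idle; apply: measurable_maxr.
Qed.

Lemma mutually_independent_reindex {d : measure_display} {T : measurableType d}
    {R : realType} (P : probability T R) {I : eqType} (Y : I -> T -> R)
    (K : finType) (tau : K -> I) (B : K -> set R) :
  mutually_independent P Y -> injective tau -> (forall x, measurable (B x)) ->
  P [set w | forall x, B x (Y (tau x) w)] = (\prod_x fine (P (Y (tau x) @^-1` B x)))%:E.
Proof.
move=> indep inj_tau mB.
pose B' (i : I) := if [pick x | tau x == i] is Some x then B x else setT.
have B'E x : B' (tau x) = B x.
  by rewrite /B'; case: pickP => [y /eqP/inj_tau -> //|/(_ x)]; rewrite eqxx.
have := indep (map tau (enum K)) B'; rewrite map_inj_uniq ?enum_uniq // big_map big_enum.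
under eq_bigr do rewrite B'E; move=> <- //; last by move=> i; rewrite /B'; case: pickP.
congr (P _); apply/seteqP; split=> [w Bw i /mapP[x _ ->]|w Bw x]; first by rewrite /preimage /= B'E.
by rewrite -B'E; apply: Bw; rewrite /= map_f ?mem_enum.
Qed.

Section joint_law.
Context {d : measure_display} {T : measurableType d} {R : realType} (P : probability T R)
  (K : finType).

Definition rv_tuple (U : K -> T -> R) (w : T) : #|K|.-tuple R :=
  [tuple U (enum_val i) w | i < #|K|].

Lemma measurable_rv_tuple (U : K -> T -> R) :
  (forall x, measurable_fun setT (U x)) -> measurable_fun setT (rv_tuple U).
Proof.
move=> mU; apply/measurable_fun_tnthP => i.
by rewrite (_ : _ \o _ = U (enum_val i)) //; apply: funext => w /=; rewrite tnth_mktuple.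
Qed.

Definition box (B : 'I_#|K| -> set R) : set (#|K|.-tuple R) := [set z | forall i, B i (tnth z i)].

Definition boxes : set (set (#|K|.-tuple R)) :=
  [set box B | B in [set B | forall i, measurable (B i)]].

Lemma measurable_boxes : measurable = <<s boxes >>.
Proof.
apply/seteqP; split=> [A mA|].
  apply: (smallest_sub _ _ mA); first exact: smallest_sigma_algebra.
  move=> X; rewrite -bigcup_seq => -[i _ [Y mY <-]]; apply: sub_sigma_algebra.
  exists (fun j => if j == i then Y else setT) => [j|]; first by case: ifP.
  apply/seteqP; split=> [z Yz|z [_ Yz] j]; last by case: ifP => // /eqP ->.
  by split=> //; have := Yz i; rewrite eqxx.
apply: smallest_sub; first exact: sigma_algebra_measurable.
move=> _ [B mB <-]; apply: measurable_forall => i.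
by rewrite -[X in measurable X]setTI; apply: measurable_tnth.
Qed.

Lemma rv_tuple_preimage_box (U : K -> T -> R) (B : 'I_#|K| -> set R) :
  rv_tuple U @^-1` box B = [set w | forall x, B (enum_rank x) (U x w)].
Proof.
apply/seteqP; split=> [w Bw x|w Bw i].
  by have := Bw (enum_rank x); rewrite tnth_mktuple enum_rankK.
by rewrite tnth_mktuple -{1}(enum_valK i); apply: Bw.
Qed.

Lemma rv_tuple_law_restr_eq (U V : K -> T -> R) (E : set T) :
  measurable E -> (forall x, measurable_fun setT (U x)) -> (forall x, measurable_fun setT (V x)) ->
  (forall B : K -> set R, (forall x, measurable (B x)) ->
    P ([set w | forall x, B x (U x w)] `&` E) = P ([set w | forall x, B x (V x w)] `&` E)) ->
  forall A, measurable A -> P (rv_tuple U @^-1` A `&` E) = P (rv_tuple V @^-1` A `&` E).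
Proof.
move=> mE mU mV eq_boxes A mA.
have := measure_unique boxes (fun=> setT) measurable_boxes _ _ _
  (pushforward (mrestr P mE) (rv_tuple U)) (pushforward (mrestr P mE) (rv_tuple V)) _ _ A mA.
rewrite /pushforward /mrestr /=; apply.
- move=> _ _ [B1 mB1 <-] [B2 mB2 <-]; exists (fun i => B1 i `&` B2 i) => [i|].
    exact: measurableI.
  by apply/seteqP; split=> z; [move=> Bz; split=> i; case: (Bz i)|move=> [Bz1 Bz2] i; split].
- by move=> _; exists (fun=> setT) => //; apply/seteqP; split.
- by apply/seteqP; split=> // z _; exists 0%N.
- exact: measurable_rv_tuple.
- exact: measurable_rv_tuple.
- move=> _ [B mB <-]; rewrite /pushforward /mrestr /= !rv_tuple_preimage_box.
  exact: (eq_boxes (fun x => B (enum_rank x))).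
- move=> _; rewrite /pushforward /mrestr /= preimage_setT setTI.
  exact: le_lt_trans (probability_le1 P mE) (ltry _).
Qed.

End joint_law.

Section queueing_model.
Context {R : realType} {d : measure_display} {T : measurableType d} (P : probability T R)
  (n k t : nat) (hkn : (k <= n)%N) (grp : 'I_k -> 'I_t -> {set 'I_n}) (mu : R)
  (X : nat -> T -> R) (Sv : nat -> 'I_n -> T -> R).
Hypotheses (mX : forall j, measurable_fun setT (X j))
  (mS : forall j s, measurable_fun setT (Sv j s))
  (dS : forall j s A, measurable A -> P (Sv j s @^-1` A) = exponential_prob mu A).

Lemma measurable_arrivals j : measurable_fun setT (fun w => arrivals X w j).
Proof. by apply: measurable_fun_bigop => // *; apply: measurable_funD. Qed.

Lemma negligible_negative_service : P.-negligible [set w | exists j s, Sv j s w < 0].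
Proof.
have negS j s : P.-negligible (Sv j s @^-1` `]-oo, 0[).
  have PS0 : P (Sv j s @^-1` `]-oo, 0[) = 0%E.
    rewrite dS //; apply: integral0_eq => y /=; rewrite in_itv /= => y_lt0.
    by rewrite lt0_exponential_pdf.
  by apply/negligibleP => //; rewrite -[_ @^-1` _]setTI; apply: mS.
have negSj j : P.-negligible (\big[setU/set0]_(s <- enum 'I_n) (Sv j s @^-1` `]-oo, 0[)).
  by elim/big_ind: _ => //; [exact: negligible_set0|exact: negligibleU].
apply: negligibleS (negligible_bigcup negSj) => w [j [s Sw]]; exists j => //.
by rewrite -bigcup_seq; exists s; rewrite /= ?mem_enum ?in_itv.
Qed.

Lemma fj_sojourn_le_sm_sojourn (file : nat -> T -> 'I_k) (x : R) j :
  (forall j i, measurable [set w | file j w = i]) ->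
  fine (P [set w | x < fj_departure hkn grp (arrivals X w) (file^~ w) (fun j s => Sv j s w) j
                       - arrivals X w j]) <=
  fine (P [set w | x < sm_departure hkn grp (arrivals X w) (file^~ w) (fun j s => Sv j s w) j
                       - arrivals X w j]).
Proof.
move=> mfile; apply: fine_measure_le_negligible negligible_negative_service _.
- apply/measurable_lt_fun/measurable_funB/measurable_arrivals.
  exact: measurable_fj_departure measurable_arrivals mfile mS j.
- apply/measurable_lt_fun/measurable_funB/measurable_arrivals.
  exact: measurable_sm_departure measurable_arrivals mfile mS j.
move=> w /= lt_x; have [|S_ge0] := pselect (exists j s, Sv j s w < 0); [by right|left].
apply: lt_le_trans lt_x _; rewrite lerD2r; apply: fj_departure_le_sm_departure => l s.
by rewrite leNgt; apply/negP => Sw; apply: S_ge0; exists l, s.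
Qed.

End queueing_model.

Section sm_law_invariance.
Context {R : realType} {d : measure_display} {T : measurableType d} (P : probability T R)
  (n k t r : nat) (hkn : (k <= n)%N) (grp : 'I_k -> 'I_t -> {set 'I_n}) (mu : R)
  (X : nat -> T -> R) (Sv : nat -> 'I_n -> T -> R) (Ch : nat -> T -> 'I_k).
Hypotheses (card_grp : forall i g, #|grp i g| = r)
  (role_inj : forall i, injective (@role_server t r n k hkn grp i))
  (mX : forall j, measurable_fun setT (X j)) (mS : forall j s, measurable_fun setT (Sv j s))
  (mCh : forall j i, measurable [set w | Ch j w = i])
  (dS : forall j s A, measurable A -> P (Sv j s @^-1` A) = exponential_prob mu A)
  (indep : mutually_independent P (prim_rv X Sv Ch)).
Variables (x : R) (J : nat).

Let sm_event (file : nat -> T -> 'I_k) := [set w |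
  x < sm_departure hkn grp (arrivals X w) (file^~ w) (fun j s => Sv j s w) J - arrivals X w J].

Let K : finType := ('I_J.+1 + 'I_J.+1 * role t r)%type.
Let choices : finType := {ffun 'I_J.+1 -> 'I_k}.

Let prim_coord (c : choices) (y : K) : prim_idx n :=
  match y with
  | inl l => inl (inl (l : nat))
  | inr (l, rho) => inl (inr ((l : nat), role_server hkn grp (c l) rho))
  end.
(* Given the objects [c] chosen by requests [0..J], [U c] lists the primitive variables that
   FJ-SM reads: the interarrival times and the service time of every role of every request. *)
Let U (c : choices) (y : K) := prim_rv X Sv Ch (prim_coord c y).

Let coord (z : #|K|.-tuple R) (y : K) := tnth z (enum_rank y).
(* [inord] clamps indices above [J]; only indices [l <= J] are ever used. *)
Let arrivals_of z (l : nat) := \sum_(l' < l.+1) coord z (inl (inord l')).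
Let services_of z (l : nat) rho := coord z (inr (inord l, rho)).
Let tuple_event :=
  [set z | x < sm_departure_roles (arrivals_of z) (services_of z) J - arrivals_of z J].

Let mU (c : choices) y : measurable_fun setT (U c y).
Proof. by case: y => [l|[l rho]]; rewrite /U /=. Qed.

Let measurable_tuple_event : measurable tuple_event.
Proof.
have m_arr l : measurable_fun setT (arrivals_of ^~ l).
  apply: measurable_fun_bigop => [*||l']; [exact: measurable_funD|exact: measurable_cst|].
  exact: measurable_tnth.
apply: measurable_lt_fun; apply: measurable_funB => //.
by apply: measurable_sm_departure_roles => // l rho; exact: measurable_tnth.
Qed.

Let coord_rv_tuple (c : choices) w y : coord (rv_tuple (U c) w) y = U c y w.
Proof. by rewrite /coord tnth_mktuple enum_rankK. Qed.

Let tuple_event_rv_tuple (c : choices) w (file : nat -> T -> 'I_k) :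
  (forall l, (l <= J)%N -> file l w = c (inord l)) ->
  tuple_event (rv_tuple (U c) w) <-> sm_event file w.
Proof.
have arrE l : (l <= J)%N -> arrivals_of (rv_tuple (U c) w) l = arrivals X w l.
  move=> lJ; apply: eq_bigr => l' _; rewrite coord_rv_tuple /U /= inordK //.
  by rewrite ltnS (leq_trans (leq_ord l') lJ).
move=> fileE; rewrite /tuple_event /sm_event /= (sm_departure_rolesE hkn card_grp) arrE //.
pose v l (rho : role t r) := Sv l (role_server hkn grp (file l w) rho) w.
rewrite (eq_sm_departure_roles (v2 := v) arrE) // => l lJ rho.
by rewrite /services_of /v coord_rv_tuple /U /= inordK // fileE.
Qed.

Let choice_event (c : choices) := [set w | forall l : 'I_J.+1, Ch l w = c l].

Let measurable_choice_event (c : choices) : measurable (choice_event c).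
Proof. by apply: measurable_forall => l; apply: mCh. Qed.

Let box_choice_event (c' c : choices) (B : K -> set R) : (forall y, measurable (B y)) ->
  P ([set w | forall y, B y (U c' y w)] `&` choice_event c) =
  ((\prod_y fine (P (U c' y @^-1` B y))) *
   \prod_(l < J.+1) fine (P (prim_rv X Sv Ch (inr (l : nat)) @^-1` [set ((c l : nat)%:R : R)])))%:E.
Proof.
move=> mB.
pose tau (y : K + 'I_J.+1) : prim_idx n :=
  match y with inl y => prim_coord c' y | inr l => inr (l : nat) end.
pose B' (y : K + 'I_J.+1) := match y with inl y => B y | inr l => [set ((c l : nat)%:R : R)] end.
have inj_tau : injective tau.
  case=> [[l1|[l1 rho1]]|l1] [[l2|[l2 rho2]]|l2] //= [].
  - by move=> /val_inj ->.
  - by move=> /val_inj eq_l; subst l2 => /role_inj ->.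
  - by move=> /val_inj ->.
have mB' y : measurable (B' y) by case: y => [y|l] /=; [exact: mB|exact: measurable_set1].
have := mutually_independent_reindex indep inj_tau mB'; rewrite big_sumType /= => <-.
congr (P _); apply/seteqP; split=> [w [Bw Cw] [y|l] //=|w Bw]; first by rewrite Cw.
split=> [y|l]; first exact: (Bw (inl y)).
by have /= /eqP := Bw (inr l); rewrite eqr_nat => /eqP /val_inj.
Qed.

Lemma sm_sojourn_law_file_invariant (i0 : 'I_k) : P (sm_event (fun _ _ => i0)) = P (sm_event Ch).
Proof.
pose choice w : choices := [ffun l : 'I_J.+1 => Ch l w].
have choiceE c : [set w | choice w = c] = choice_event c.
  apply/seteqP; split=> [w <- l|w Cw]; first by rewrite ffunE.
  by apply/ffunP => l; rewrite ffunE.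
have mchoice c : measurable [set w | choice w = c] by rewrite choiceE.
have m_sm : measurable (sm_event Ch).
  apply: measurable_lt_fun; apply: measurable_funB; last exact: measurable_arrivals.
  exact: measurable_sm_departure (measurable_arrivals mX) mCh mS J.
have -> : sm_event (fun _ _ => i0) = rv_tuple (U [ffun=> i0]) @^-1` tuple_event.
  apply/seteqP; split=> w /=;
    by rewrite (tuple_event_rv_tuple _ (file := fun _ _ => i0)) // => *; rewrite ffunE.
rewrite !(measure_finite_partition P mchoice) //; last first.
  by rewrite -[_ @^-1` _]setTI; apply: measurable_rv_tuple.
apply: eq_bigr => c _; rewrite choiceE.
(* Both sides factor by independence into the same product, all service times being
   equidistributed. *)
transitivity (P (rv_tuple (U c) @^-1` tuple_event `&` choice_event c)).
  apply: rv_tuple_law_restr_eq => // B mB; rewrite !box_choice_event //.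
  by congr ((_ * _)%:E); apply: eq_bigr => -[l|[l rho]] _ //=; rewrite !dS.
have ChE w : choice_event c w -> forall l, (l <= J)%N -> Ch l w = c (inord l).
  by move=> Cw l lJ; rewrite -Cw inordK.
congr (P _); apply/seteqP; split=> w [Hw Cw]; split=> //.
  exact/(tuple_event_rv_tuple (ChE w Cw)).
exact/(tuple_event_rv_tuple (ChE w Cw)).
Qed.

End sm_law_invariance.

Theorem lemma5
  (R : realType) (d : measure_display) (T : measurableType d) (P : probability T R)
  (n k t r : nat) (hkn : (k <= n)%N)
  (F : fieldType) (G : 'M[F]_(k, n)) (grp : 'I_k -> 'I_t -> {set 'I_n})
  (Hcode : systematic_rt_available r hkn G grp)
  (lam mu : R) (hlam : 0 < lam) (hmu : 0 < mu)
  (p : 'I_k -> R) (hp0 : forall i, 0 <= p i) (hp1 : \sum_i p i = 1)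
  (X : nat -> T -> R)              (* interarrival times *)
  (Sv : nat -> 'I_n -> T -> R)     (* service times *)
  (Ch : nat -> T -> 'I_k)          (* object chosen by request j (FJ-GA, FJ-SM) *)
  (mX : forall j, measurable_fun setT (X j))
  (mS : forall j s, measurable_fun setT (Sv j s))
  (mCh : forall j i, measurable [set w | Ch j w = i])
  (dX : forall j A, measurable A -> P (X j @^-1` A) = exponential_prob lam A)
  (dS : forall j s A, measurable A -> P (Sv j s @^-1` A) = exponential_prob mu A)
  (dCh : forall j i, P [set w | Ch j w = i] = (p i)%:E)
  (indep : mutually_independent P (prim_rv X Sv Ch)) :
  forall x : R, 0 <= x ->
    let T_GA j w := fj_departure hkn grp (arrivals X w) (Ch^~ w) (fun j s => Sv j s w) j
                    - arrivals X w j in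
    let T_FA i0 j w := fj_departure hkn grp (arrivals X w) (fun _ => i0) (fun j s => Sv j s w) j
                    - arrivals X w j in
    let T_SM j w := sm_departure hkn grp (arrivals X w) (Ch^~ w) (fun j s => Sv j s w) j
                    - arrivals X w j in
    (forall lGA lSM : R,
       (fun j : nat => fine (P [set w | x < T_GA j w])) @ \oo --> lGA ->
       (fun j : nat => fine (P [set w | x < T_SM j w])) @ \oo --> lSM ->
       lGA <= lSM) /\
    (forall (i0 : 'I_k) (lFA lSM : R),
       (fun j : nat => fine (P [set w | x < T_FA i0 j w])) @ \oo --> lFA ->
       (fun j : nat => fine (P [set w | x < T_SM j w])) @ \oo --> lSM ->
       lFA <= lSM).
Proof.
move=> x _ T_GA T_FA T_SM.
have [_ code] := Hcode.
have card_grp i g : #|grp i g| = r by have [] := code i.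
have role_inj i : injective (@role_server t r n k hkn grp i).
  by have [_ [disj [notin _]]] := code i; apply: role_server_inj.
split=> [lGA lSM|i0 lFA lSM] cvg_FJ cvg_SM; apply: (ler_cvg_to cvg_FJ cvg_SM); apply: nearW => j.
  by apply: (fj_sojourn_le_sm_sojourn hkn grp mX mS dS); exact: mCh.
rewrite /T_SM -(sm_sojourn_law_file_invariant card_grp role_inj mX mS mCh dS indep x j i0).
apply: (fj_sojourn_le_sm_sojourn hkn grp mX mS dS) => *; exact: measurable_const_set.
Qed.
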